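(* Let $(R,\mathfrak{m})$ satisfy condition $\bigstar$, and let $S\subseteq R$ be a subring with $S\neq R$. Then $S+\mathfrak{m}^2\neq R$. In particular, if $S$ is a maximal element of the set of proper subrings of $R$ having the same residue field as $R$, then $\mathfrak{m}^2\subseteq S$.
   Context: All rings are commutative and unital. Condition $\bigstar$ on a ring $(R,\mathfrak{m})$: $R$ is a local ring (unique maximal ideal $\mathfrak{m}$, not necessarily Noetherian) of characteristic $p^N$ for a prime $p$ and some $N\ge 1$, with finite residue field $R/\mathfrak{m}\cong\mathbb{F}_q$, and $\mathfrak{m}$ is a nilpotent ideal. Any subring $S$ of $R$ is local with maximal ideal $\mathfrak{m}_S=\mathfrak{m}\cap S$, and its residue field $S/\mathfrak{m}_S$ is naturally a subfield of $R/\mathfrak{m}$; ''same residue field as $R$'' means $S/\mathfrak{m}_S=R/\mathfrak{m}$ under this identification. *)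

(* Subsets of a ring are represented as Prop-valued predicates
   R -> Prop (membership in m^2 etc. is not decidable in general). *)
From HB Require Import structures.
From mathcomp Require Import all_boot all_order all_algebra.
Set Implicit Arguments. Unset Strict Implicit. Unset Printing Implicit Defensive.
Import GRing.Theory.
Local Open Scope ring_scope.

Section Defs.
Variable R : comNzRingType.

Definition is_ideal17 (I : R -> Prop) : Prop :=
  I 0 /\ (forall x y, I x -> I y -> I (x + y)) /\ (forall r x, I x -> I (r * x)).

Definition is_subring17 (S : R -> Prop) : Prop :=
  S 1 /\ (forall x y, S x -> S y -> S (x - y)) /\ (forall x y, S x -> S y -> S (x * y)).

Definition local_with_max (m : R -> Prop) : Prop :=
  is_ideal17 m /\ ~ m 1 /\
  (forall I : R -> Prop, is_ideal17 I -> ~ I 1 -> forall x, I x -> m x).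

Definition prodset (m : R -> Prop) (k : nat) (y : R) : Prop :=
  exists f : 'I_k -> R, (forall i, m (f i)) /\ y = \prod_(i < k) f i.

Definition idealpow (m : R -> Prop) (k : nat) (x : R) : Prop :=
  exists s : seq R, (forall y, y \in s -> prodset m k y) /\ x = \sum_(y <- s) y.

Definition nilpotent_ideal (m : R -> Prop) : Prop :=
  exists k : nat, forall x, idealpow m k x -> x = 0.

Definition has_char (n : nat) : Prop :=
  (n%:R : R) = 0 /\ forall k : nat, (k%:R : R) = 0 -> (n %| k)%N.

Definition finite_residue (m : R -> Prop) : Prop :=
  exists s : seq R, forall x : R, exists2 y, y \in s & m (x - y).

Definition star (m : R -> Prop) : Prop :=
  local_with_max m /\
  (exists p N : nat, prime p /\ (0 < N)%N /\ has_char (p ^ N)) /\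
  finite_residue m /\ nilpotent_ideal m.

(* S has the same residue field as R: S/(m ∩ S) -> R/m is onto *)
Definition same_residue (m S : R -> Prop) : Prop :=
  forall x : R, exists2 s, S s & m (x - s).

Definition not_whole (S : R -> Prop) : Prop := exists x, ~ S x.

End Defs.

(* If S + m^2 = R then m^n is contained in (S ∩ m^n) + m^(n+1) for every n:
   write each factor a of a product as a = s + z with s ∈ S ∩ m and z ∈ m^2.
   Hence S + m^n = R for all n, and nilpotence of m forces S = R.  For the
   second claim, S + m^2 is a subring with the same residue field as S, so
   it is proper by the first claim and equals S by maximality. *)
From mathcomp Require Import all_boot all_order all_algebra.
From Stdlib Require Import Classical.
Set Implicit Arguments. Unset Strict Implicit.
Import GRing.Theory.
Local Open Scope ring_scope.

Section IdealPower.
Variable R : comNzRingType.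
Variable m : R -> Prop.
Hypothesis m_ideal : is_ideal17 m.

(* [ipow n] is the ideal m^n, with m^0 = R. *)
Inductive ipow : nat -> R -> Prop :=
| ipow0 x : ipow 0 x
| ipow_zero n : ipow n 0
| ipowD n x y : ipow n x -> ipow n y -> ipow n (x + y)
| ipow_mulS n a b : m a -> ipow n b -> ipow n.+1 (a * b).

Lemma ipow_le n k x : (k <= n)%N -> ipow n x -> ipow k x.
Proof.
move=> le_kn H; elim: H k le_kn => {n x}.
- by move=> x k; rewrite leqn0 => /eqP ->; constructor.
- by move=> *; constructor.
- by move=> n x y _ IHx _ IHy k le_kn; constructor; [exact: IHx | exact: IHy].
- move=> n a b ma _ IH [|k] le_kn; first by constructor.
  by constructor => //; exact: IH.
Qed.

Lemma ipowMl n r x : ipow n x -> ipow n (r * x).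
Proof.
move=> H; elim: H r => {n x}.
- by move=> *; constructor.
- by move=> n r; rewrite mulr0; constructor.
- by move=> n x y _ IHx _ IHy r; rewrite mulrDr; constructor; [exact: IHx | exact: IHy].
- by move=> n a b ma _ IH r; rewrite mulrCA; constructor => //; exact: IH.
Qed.

Lemma ipowB n x y : ipow n x -> ipow n y -> ipow n (x - y).
Proof. by move=> px py; constructor => //; rewrite -mulN1r; exact: ipowMl. Qed.

Lemma ipowM n k x y : ipow n x -> ipow k y -> ipow (n + k) (x * y).
Proof.
move=> H; elim: H y => {n x}.
- by move=> x y py; rewrite add0n; exact: ipowMl.
- by move=> n y _; rewrite mul0r; constructor.
- by move=> n x x' _ IHx _ IHx' y py; rewrite mulrDl; constructor; [exact: IHx | exact: IHx'].
- by move=> n a b ma _ IH y py; rewrite addSn -mulrA; constructor => //; exact: IH.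
Qed.

Lemma ipow_mem n x : (0 < n)%N -> ipow n x -> m x.
Proof.
case: m_ideal => m0 [mD mM] n_gt0 H; elim: H n_gt0 => {n x} //.
- by move=> n x y _ IHx _ IHy n_gt0; apply: mD; [exact: IHx | exact: IHy].
- by move=> n a b ma _ _ _; rewrite mulrC; exact: mM.
Qed.

Lemma prodset_ipow n y : prodset m n y -> ipow n y.
Proof.
elim: n y => [|n IH] y [f [mf ->]]; first by constructor.
rewrite big_ord_recl; constructor => //; apply: IH.
by exists (fun i => f (lift ord0 i)).
Qed.

Lemma idealpow_ipow n x : idealpow m n x -> ipow n x.
Proof.
move=> [s [hs ->]]; elim: s hs => [|a s IH] hs; first by rewrite big_nil; constructor.
rewrite big_cons; constructor.
  by apply: prodset_ipow; apply: hs; rewrite inE eqxx.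
by apply: IH => z zs; apply: hs; rewrite inE zs orbT.
Qed.

Lemma prodset_mull n a y : m a -> prodset m n y -> prodset m n.+1 (a * y).
Proof.
move=> ma [f [mf ->]].
exists (fun i : 'I_n.+1 => if unlift ord0 i is Some j then f j else a); split.
  by move=> i; case: (unlift ord0 i).
by rewrite big_ord_recl unlift_none; congr (_ * _); apply: eq_bigr => i _; rewrite liftK.
Qed.

(* The converse of [idealpow_ipow] fails only for n = 0, where m^0 is all of R
   but [idealpow m 0] is the set of sums of ones. *)
Lemma ipow_idealpow n x : ipow n x -> n = 0%N \/ idealpow m n x.
Proof.
case: m_ideal => m0 [mD mM].
elim=> {n x}; first by left.
- by move=> n; right; exists [::]; rewrite big_nil.
- move=> n x y _ [->|[s1 [h1 ->]]]; first by left.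
  move=> _ [->|[s2 [h2 ->]]]; first by left.
  right; exists (s1 ++ s2); split; last by rewrite big_cat.
  by move=> z; rewrite mem_cat => /orP [] ?; [apply: h1 | apply: h2].
- move=> n a b ma _ [->|[s [hs ->]]]; right.
    exists [:: a * b]; split; last by rewrite big_seq1.
    move=> z; rewrite inE => /eqP ->; exists (fun _ => a * b); split.
      by move=> _; rewrite mulrC; apply: mM.
    by rewrite big_ord1.
  exists (map (fun y => a * y) s); split; last by rewrite big_map big_distrr.
  by move=> z /mapP [y ys ->]; apply: prodset_mull => //; exact: hs.
Qed.

Lemma nilpotent_ipow : nilpotent_ideal m -> exists k, forall x, ipow k x -> x = 0.
Proof.
move=> [k mk0]; exists k => x px.
case: (ipow_idealpow px) => [k0|]; last exact: mk0.
have : (1 : R) = 0.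
  apply: mk0; exists [:: 1]; split; last by rewrite big_seq1.
  move=> z; rewrite inE => /eqP ->; exists (fun _ => 0).
  by rewrite k0 big_ord0; split => // -[].
by move/eqP; rewrite oner_eq0.
Qed.

Section AddPower.
Variable S : R -> Prop.
Hypothesis S_subring : is_subring17 S.

Definition add_ipow n x : Prop := exists s y, S s /\ ipow n y /\ x = s + y.

Lemma subring0 : S 0.
Proof. by case: S_subring => S1 [SB _]; rewrite -(subrr 1); exact: SB. Qed.

Lemma subringD x y : S x -> S y -> S (x + y).
Proof.
case: S_subring => _ [SB _] Sx Sy.
rewrite -[y]opprK -[- y]sub0r; apply: (SB) => //; apply: (SB) => //; exact: subring0.
Qed.

Lemma mem_add_ipow n s : S s -> add_ipow n s.
Proof. by move=> Ss; exists s, 0; do !split => //; [constructor | rewrite addr0]. Qed.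

Lemma add_ipow_subring n : is_subring17 (add_ipow n.+1).
Proof.
case: S_subring => S1 [SB SM].
split; first by exists 1, 0; do !split => //; [constructor | rewrite addr0].
split=> _ _ [s1 [y1 [S1s [py1 ->]]]] [s2 [y2 [S2s [py2 ->]]]].
  exists (s1 - s2), (y1 - y2); do !split; [exact: SB | exact: ipowB |].
  by rewrite opprD addrACA.
exists (s1 * s2), (s1 * y2 + y1 * s2 + y1 * y2); do !split; first exact: SM.
  by constructor; first constructor; rewrite ?(mulrC y1); exact: ipowMl.
by rewrite mulrDl !mulrDr !addrA.
Qed.

Hypothesis S_cover2 : forall x, add_ipow 2 x.

Lemma ipow_split n b : ipow n b ->
  exists t w, S t /\ ipow n t /\ ipow n.+1 w /\ b = t + w.
Proof.
case: S_subring => _ [_ SM].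
elim=> {n b}.
- move=> x; have [s [y [Ss [py ->]]]] := S_cover2 x.
  by exists s, y; do !split => //; [constructor | exact: ipow_le py].
- by move=> n; exists 0, 0; do !split; try constructor; [exact: subring0 | rewrite addr0].
- move=> n x y _ [t1 [w1 [St1 [pt1 [pw1 ->]]]]] _ [t2 [w2 [St2 [pt2 [pw2 ->]]]]].
  exists (t1 + t2), (w1 + w2); do !split; try constructor => //; first exact: subringD.
  by rewrite addrACA.
- move=> n a b ma _ [t [w [St [pt [pw ->]]]]].
  have [s [z [Ss [pz ea]]]] := S_cover2 a.
  have ms : m s.
    have -> : s = a - z by rewrite ea addrK.
    case: m_ideal => _ [mD mM]; apply: mD => //; rewrite -mulN1r; apply: mM; exact: ipow_mem pz.
  exists (s * t), (s * w + z * t + z * w); do !split; first exact: SM.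
  + by constructor.
  + constructor; first constructor; first by constructor.
      exact: ipowM pz pt.
    by apply: (@ipow_le (2 + n.+1)); [rewrite add2n | exact: ipowM].
  + by rewrite ea !mulrDl !mulrDr !addrA.
Qed.

Lemma add_ipow_cover n x : add_ipow n x.
Proof.
elim: n => [|n [s [w [Ss [pw ->]]]]].
  by exists 0, x; do !split; [exact: subring0 | constructor | rewrite add0r].
have [t [w' [St [_ [pw' ->]]]]] := ipow_split pw.
by exists (s + t), w'; do !split => //; [exact: subringD | rewrite addrA].
Qed.

Lemma subring_full : nilpotent_ideal m -> forall x, S x.
Proof.
move=> /nilpotent_ipow [k mk0] x.
have [s [w [Ss [pw ->]]]] := add_ipow_cover k x.
by rewrite (mk0 _ pw) addr0.
Qed.

End AddPower.

Lemma proper_add_ipow2 S : nilpotent_ideal m -> is_subring17 S -> not_whole S ->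
  not_whole (add_ipow S 2).
Proof.
move=> m_nil S_subring [x0 Sx0]; apply: NNPP => cover.
apply: Sx0; apply: subring_full => // x.
by apply: NNPP => Nx; apply: cover; exists x.
Qed.

End IdealPower.

Theorem theorem17 (R : comNzRingType) (m : R -> Prop) (Hstar : star m) :
  (forall S : R -> Prop, is_subring17 S -> not_whole S ->
     exists x : R, ~ (exists s y, S s /\ idealpow m 2 y /\ x = s + y))
  /\
  (forall S : R -> Prop,
     (is_subring17 S /\ not_whole S /\ same_residue m S /\
      (forall T : R -> Prop, is_subring17 T -> not_whole T -> same_residue m T ->
         (forall x, S x -> T x) -> forall x, T x -> S x)) ->
     forall x, idealpow m 2 x -> S x).
Proof.
case: Hstar => [[m_ideal _] [_ [_ m_nil]]].
split=> [S S_subring S_proper | S [S_subring [S_proper [S_res S_max]]] x m2x].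
  have [x Nx] := proper_add_ipow2 m_ideal m_nil S_subring S_proper.
  exists x => -[s [y [Ss [m2y ex]]]]; apply: Nx.
  by exists s, y; do !split => //; exact: idealpow_ipow.
apply: (S_max (add_ipow m S 2)).
- exact: add_ipow_subring.
- exact: proper_add_ipow2.
- by move=> z; have [s Ss ms] := S_res z; exists s => //; exact: mem_add_ipow.
- exact: mem_add_ipow.
- exists 0, x; do !split; [exact: subring0 | exact: idealpow_ipow | by rewrite add0r].
Qed.
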